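(* Let $f\in C[0,1]$ satisfy $f(x)\neq0$ for all $x\in[0,1]$. Then for every $n\in\mathbb{N}$, $\overline{\dim}_B G(f^n)=\overline{\dim}_B G(f)$, $\underline{\dim}_B G(f^n)=\underline{\dim}_B G(f)$, $\dim_P G(f^n)=\dim_P G(f)$, $\dim_H G(f^n)=\dim_H G(f)$, and $\dim_A G(f^n)=\dim_A G(f)$.
   Context: $C[0,1]$ is the space of real-valued continuous functions on $[0,1]$; $G(f)=\{(x,f(x)):x\in[0,1]\}\subset\mathbb{R}^2$ is the graph of $f$, and $f^n$ is the pointwise $n$-th power. $\overline{\dim}_B$, $\underline{\dim}_B$, $\dim_P$, $\dim_H$, $\dim_A$ denote the upper box-counting, lower box-counting, packing, Hausdorff and Assouad dimensions of subsets of $\mathbb{R}^2$ (with the Euclidean metric). *)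

From HB Require Import structures.
From mathcomp Require Import all_boot all_order all_algebra.
From mathcomp Require Import all_classical all_reals all_analysis.
Set Implicit Arguments. Unset Strict Implicit. Unset Printing Implicit Defensive.
Import Order.TTheory GRing.Theory Num.Theory.
Local Open Scope classical_set_scope.
Local Open Scope ring_scope.

Section FractalDims.
Variable R : realType.

Definition edist (p q : R * R) : R :=
  Num.sqrt ((p.1 - q.1) ^+ 2 + (p.2 - q.2) ^+ 2).

(* diameter of a set (in \bar R; -oo for the empty set) *)
Definition ediam (U : set (R * R)) : \bar R :=
  ereal_sup [set (edist p q)%:E | p in U & q in U].

Definition cball2 (x : R * R) (r : R) : set (R * R) := [set y | edist x y <= r].

Definition graph01 (f : R -> R) : set (R * R) :=
  [set p | 0 <= p.1 <= 1 /\ p.2 = f p.1].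

(* N_delta(F): smallest number of sets of diameter at most delta covering F
   (+oo if there is no finite such cover). *)
Definition covnum (delta : R) (F : set (R * R)) : \bar R :=
  ereal_inf [set (k%:R)%:E | k in [set k : nat | exists U : 'I_k -> set (R * R),
     (forall i, (ediam (U i) <= delta%:E)%E) /\ F `<=` \bigcup_i U i]].

Definition box_ratio (delta : R) (F : set (R * R)) : \bar R :=
  match covnum delta F with
  | r%:E => (ln r / - ln delta)%:E
  | _ => +oo%E
  end.

Definition upper_box_dim (F : set (R * R)) : \bar R :=
  ereal_inf [set ereal_sup [set box_ratio d F | d in [set d | 0 < d < e]]
            | e in [set e : R | 0 < e]].

Definition lower_box_dim (F : set (R * R)) : \bar R :=
  ereal_sup [set ereal_inf [set box_ratio d F | d in [set d | 0 < d < e]]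
            | e in [set e : R | 0 < e]].

Definition diam_pow (s : R) (U : set (R * R)) : \bar R :=
  if `[< U = set0 >] then 0%E else
  match ediam U with
  | r%:E => (powR r s)%:E
  | _ => +oo%E
  end.

Definition hausdorff_delta (s delta : R) (F : set (R * R)) : \bar R :=
  ereal_inf [set (\sum_(i <oo) diam_pow s (U i))%E
            | U in [set U : nat -> set (R * R) |
                (forall i, (ediam (U i) <= delta%:E)%E) /\ F `<=` \bigcup_i U i]].

Definition hausdorff_measure (s : R) (F : set (R * R)) : \bar R :=
  ereal_sup [set hausdorff_delta s d F | d in [set d : R | 0 < d]].

Definition hausdorff_dim (F : set (R * R)) : \bar R :=
  ereal_inf [set s%:E | s in [set s : R | 0 <= s /\ hausdorff_measure s F = 0%E]].

(* Packing measure: delta-packings are countable (indexed by J : set nat)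
   pairwise disjoint families of closed balls B(x_i, r_i) with x_i in F and
   0 < r_i <= delta; |B(x_i,r_i)| = 2 r_i. *)
Definition packing_delta (s delta : R) (F : set (R * R)) : \bar R :=
  ereal_sup [set (\sum_(i <oo) (if `[< P.1 i >] then (powR (2 * P.2 i) s)%:E else 0))%E
            | P in [set P : set nat * (nat -> R) | exists x : nat -> R * R,
                 (forall i, P.1 i -> F (x i) /\ 0 < P.2 i <= delta) /\
                 (forall i j, P.1 i -> P.1 j -> i <> j ->
                    cball2 (x i) (P.2 i) `&` cball2 (x j) (P.2 j) = set0)]].

Definition packing_premeasure (s : R) (F : set (R * R)) : \bar R :=
  ereal_inf [set packing_delta s d F | d in [set d : R | 0 < d]].

Definition packing_measure (s : R) (F : set (R * R)) : \bar R :=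
  ereal_inf [set (\sum_(i <oo) packing_premeasure s (Fi i))%E
            | Fi in [set Fi : nat -> set (R * R) | F `<=` \bigcup_i Fi i]].

Definition packing_dim (F : set (R * R)) : \bar R :=
  ereal_inf [set s%:E | s in [set s : R | 0 <= s /\ packing_measure s F = 0%E]].

Definition assouad_dim (F : set (R * R)) : \bar R :=
  ereal_inf [set a%:E | a in [set a : R | 0 <= a /\ exists C : R, 0 < C /\
     forall r Rr : R, 0 < r -> r < Rr -> forall x, F x ->
       (covnum r (cball2 x Rr `&` F) <= (C * powR (Rr / r) a)%:E)%E]].

End FractalDims.

From Pilot Require Import Defs.
From HB Require Import structures.
From mathcomp Require Import all_boot all_order all_algebra.
From mathcomp Require Import all_classical all_reals all_analysis.
From mathcomp Require Import ring lra.
Import Order.TTheory GRing.Theory Num.Theory.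
Import numFieldNormedType.Exports.
Set Implicit Arguments. Unset Strict Implicit.
Local Open Scope classical_set_scope.
Local Open Scope ring_scope.

(** Since [f] is continuous and has no zero on [[0, 1]], it has constant sign
    and [m <= |f| <= M] there for some [0 < m]; hence for [x, y] in [[0, 1]]
    [|f x ^+ n - f y ^+ n| = |f x - f y| * |\sum_i f x ^+ (n.-1 - i) * f y ^+ i|]
    with the last factor between [n m^(n-1)] and [n M^(n-1)]. So
    [(x, f x) |-> (x, f x ^+ n)] is a bi-Lipschitz bijection between the two
    graphs, and each of the five dimensions is non-increasing under Lipschitz
    images (the Assouad dimension under bi-Lipschitz ones). *)

(* [Defs.edist] is shadowed by the [edist] of the Urysohn development. *)
Local Notation edist := Defs.edist.

Section EuclideanPlane.
Variable R : realType.
Implicit Types (p q u v : R * R) (r : R).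

Lemma edist_self p : edist p p = 0.
Proof. by rewrite /edist !subrr expr0n /= addr0 sqrtr0. Qed.

Lemma edist_sym p q : edist p q = edist q p.
Proof. by rewrite /edist -(sqrrN (p.1 - q.1)) -(sqrrN (p.2 - q.2)) !opprB. Qed.

Lemma edist_triangle p q u : edist p u <= edist p q + edist q u.
Proof.
rewrite /edist.
set a1 := p.1 - q.1; set a2 := p.2 - q.2; set b1 := q.1 - u.1; set b2 := q.2 - u.2.
have -> : p.1 - u.1 = a1 + b1 by rewrite /a1 /b1; ring.
have -> : p.2 - u.2 = a2 + b2 by rewrite /a2 /b2; ring.
set X := Num.sqrt (a1 ^+ 2 + a2 ^+ 2); set Y := Num.sqrt (b1 ^+ 2 + b2 ^+ 2).
have X0 : 0 <= X by exact: sqrtr_ge0.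
have Y0 : 0 <= Y by exact: sqrtr_ge0.
have XX : X ^+ 2 = a1 ^+ 2 + a2 ^+ 2 by rewrite sqr_sqrtr // addr_ge0 // sqr_ge0.
have YY : Y ^+ 2 = b1 ^+ 2 + b2 ^+ 2 by rewrite sqr_sqrtr // addr_ge0 // sqr_ge0.
rewrite -(ger0_norm (addr_ge0 X0 Y0)) -sqrtr_sqr ler_sqrt ?sqr_ge0 //.
have cauchy_schwarz : a1 * b1 + a2 * b2 <= X * Y.
  have sq : (a1 * b1 + a2 * b2) ^+ 2 <= (X * Y) ^+ 2.
    by rewrite exprMn XX YY; have := sqr_ge0 (a1 * b2 - a2 * b1); nra.
  have [le0|gt0] := lerP (a1 * b1 + a2 * b2) 0.
    exact: le_trans le0 (mulr_ge0 X0 Y0).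
  by rewrite -(ler_pXn2r (n := 2)) // nnegrE ?mulr_ge0 // ltW.
nra.
Qed.

Lemma edist_scale p q u v (c : R) :
  u.1 - v.1 = c * (p.1 - q.1) -> u.2 - v.2 = c * (p.2 - q.2) ->
  edist u v = `|c| * edist p q.
Proof.
move=> h1 h2; rewrite /edist h1 h2 !exprMn -mulrDr sqrtrM ?sqr_ge0 //.
by rewrite sqrtr_sqr.
Qed.

Lemma edist_vertical_le p q u v (K : R) : 1 <= K ->
  u.1 - v.1 = p.1 - q.1 -> `|u.2 - v.2| <= K * `|p.2 - q.2| ->
  edist u v <= K * edist p q.
Proof.
move=> K1 h1 h2; have K0 : 0 <= K by exact: le_trans K1.
rewrite /edist h1 -(ger0_norm K0) -sqrtr_sqr -sqrtrM ?sqr_ge0 //.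
rewrite ler_sqrt ?mulr_ge0 ?addr_ge0 ?sqr_ge0 // mulrDr.
apply: lerD.
  by rewrite ler_peMl ?sqr_ge0 // -(expr1n _ 2) ler_pXn2r ?nnegrE.
rewrite -[X in X <= _]real_normK ?num_real // -[X in _ <= _ * X]real_normK ?num_real //.
by rewrite -exprMn ler_pXn2r ?nnegrE ?mulr_ge0.
Qed.

(* The point dividing [[p, q]] in the ratio [r1 : r2] lies in both balls. *)
Lemma cball2_meet p q r1 r2 : 0 < r1 -> 0 < r2 -> edist p q <= r1 + r2 ->
  exists z, cball2 p r1 z /\ cball2 q r2 z.
Proof.
move=> r10 r20 hd; have s0 : 0 < r1 + r2 by rewrite addr_gt0.
set t := r1 / (r1 + r2).
have t0 : 0 <= t by rewrite divr_ge0 // ltW.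
have t1 : 1 - t = r2 / (r1 + r2) by rewrite /t; field; rewrite gt_eqF.
have t10 : 0 <= 1 - t by rewrite t1 divr_ge0 // ltW.
exists (p.1 + t * (q.1 - p.1), p.2 + t * (q.2 - p.2)); split; rewrite /cball2 /=.
- rewrite (@edist_scale p q _ _ t) /=; [|ring|ring].
  rewrite ger0_norm // /t -ler_pdivlMl ?divr_gt0 //.
  by rewrite invf_div divfK ?gt_eqF.
- rewrite (@edist_scale q p _ _ (1 - t)) /=; [|ring|ring].
  rewrite ger0_norm // t1 -ler_pdivlMl ?divr_gt0 //.
  by rewrite invf_div divfK ?gt_eqF // edist_sym.
Qed.

Lemma cball2_disjoint p q r1 r2 :
  r1 + r2 < edist p q -> cball2 p r1 `&` cball2 q r2 = set0.
Proof.
move=> h; apply/seteqP; split => // z [/= h1 h2].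
have := edist_triangle p z q; rewrite (edist_sym z q) => h3.
by move: h; rewrite ltNge (le_trans h3 (lerD h1 h2)).
Qed.

Lemma ediam_ge0 (U : set (R * R)) p : U p -> (0 <= ediam U)%E.
Proof.
move=> Up; apply: ereal_sup_ubound; exists p => //; exists p => //.
by rewrite edist_self.
Qed.

Definition edist_lipschitz (A : set (R * R)) (L : R) (phi : R * R -> R * R) :=
  forall p q, A p -> A q -> edist (phi p) (phi q) <= L * edist p q.

End EuclideanPlane.

Section LipschitzImage.
Variable R : realType.
Implicit Types (A B F G U : set (R * R)) (phi : R * R -> R * R) (L d s : R).
Local Open Scope ereal_scope.

Lemma ediam_image_le phi L U A : (0 <= L)%R -> edist_lipschitz A L phi ->
  ediam (phi @` (U `&` A)) <= L%:E * ediam U.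
Proof.
move=> L0 hL; apply: ge_ereal_sup => _ [a [p [Up Ap] <-] [b [q [Uq Aq] <-] <-]].
apply: (@le_trans _ _ (L * edist p q)%:E); first by rewrite lee_fin hL.
rewrite EFinM; apply: lee_wpmul2l; first by rewrite lee_fin.
by apply: ereal_sup_ubound; exists p => //; exists q.
Qed.

Lemma ediam_image_le_div phi L d U A : (0 < L)%R -> edist_lipschitz A L phi ->
  ediam U <= (d / L)%:E -> ediam (phi @` (U `&` A)) <= d%:E.
Proof.
move=> L0 hL hU; apply: le_trans (ediam_image_le U (ltW L0) hL) _.
apply: (@le_trans _ _ (L%:E * (d / L)%:E)).
  by apply: lee_wpmul2l => //; rewrite lee_fin ltW.
by rewrite -EFinM mulrC divfK // gt_eqF.
Qed.

Lemma image_cover (T T' I : Type) (phi : T -> T') (U : I -> set T) (A : set T)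
    (B : set T') :
  B `<=` phi @` A -> A `<=` \bigcup_i U i ->
  B `<=` \bigcup_i (phi @` (U i `&` A)).
Proof.
move=> hB hc q /hB [p Ap <-]; have [i _ Uip] := hc p Ap.
by exists i => //; exists p.
Qed.

Lemma covnum_image_le phi L d A B : (0 < L)%R -> edist_lipschitz A L phi ->
  B `<=` phi @` A -> covnum d B <= covnum (d / L) A.
Proof.
move=> L0 hL hB; apply: ereal_inf_le_tmp; apply: image_subset => k [U [hU hc]].
exists (fun i => phi @` (U i `&` A)); split; last exact: image_cover hc.
by move=> i; exact: ediam_image_le_div L0 hL (hU i).
Qed.

Lemma diam_pow_ge0 s U : 0 <= diam_pow s U.
Proof.
rewrite /diam_pow; case: asboolP => // _; case: (ediam U) => // r.
by rewrite lee_fin powR_ge0.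
Qed.

Lemma diam_pow_image_le phi L s U A : (0 < L)%R -> (0 <= s)%R ->
  edist_lipschitz A L phi ->
  diam_pow s (phi @` (U `&` A)) <= (powR L s)%:E * diam_pow s U.
Proof.
move=> L0 s0 hL; have hD := ediam_image_le U (ltW L0) hL.
rewrite {1}/diam_pow; case: asboolP => [_|V0].
  by rewrite mule_ge0 ?diam_pow_ge0 // lee_fin powR_ge0.
have [_ [p [Up Ap] _]] : exists q, (phi @` (U `&` A)) q by apply/set0P/eqP.
have Vge0 : 0 <= ediam (phi @` (U `&` A)) by apply: (ediam_ge0 (p := phi p)); exists p.
rewrite /diam_pow asboolF; last by move=> U0; rewrite U0 in Up.
move: hD Vge0; case: (ediam U) => [r| |] hD Vge0.
- move: hD Vge0; case: (ediam (phi @` (U `&` A))) => [r'| |] //.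
  rewrite -!EFinM !lee_fin => hD Vge0.
  have r0 : (0 <= r)%R by rewrite -(pmulr_rge0 _ L0); exact: le_trans hD.
  by rewrite -powRM ?(ltW L0) // ge0_ler_powR // nnegrE mulr_ge0 // ltW.
- by rewrite gt0_muley ?leey // lte_fin powR_gt0.
- by move: (le_trans Vge0 hD); rewrite gt0_muleNy ?lte_fin.
Qed.

Lemma hausdorff_delta_ge0 s d A : 0 <= hausdorff_delta s d A.
Proof.
apply: le_ereal_inf_tmp => _ [U _ <-].
by apply: nneseries_ge0 => i _ _; exact: diam_pow_ge0.
Qed.

Lemma hausdorff_delta_image_le phi L s d A B : (0 < L)%R -> (0 <= s)%R ->
  edist_lipschitz A L phi -> B `<=` phi @` A ->
  hausdorff_delta s d B <= (powR L s)%:E * hausdorff_delta s (d / L) A.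
Proof.
move=> L0 s0 hL hB; rewrite /hausdorff_delta -ereal_inf_pZl ?powR_gt0 //.
apply: le_ereal_inf_tmp => _ [_ [U [hU hc] <-] <-].
apply: ge_ereal_inf; exists (\sum_(i <oo) diam_pow s (phi @` (U i `&` A))).
  exists (fun i => phi @` (U i `&` A)) => //; split; last exact: image_cover hc.
  by move=> i; exact: ediam_image_le_div L0 hL (hU i).
rewrite -nneseriesZl; last by move=> i _; exact: diam_pow_ge0.
apply: lee_nneseries; first by move=> i _ _; exact: diam_pow_ge0.
by move=> i _; exact: diam_pow_image_le.
Qed.

Lemma hausdorff_dim_image_le phi L F G : (0 < L)%R ->
  edist_lipschitz F L phi -> G `<=` phi @` F -> hausdorff_dim G <= hausdorff_dim F.
Proof.
move=> L0 hL hG; apply: ereal_inf_le_tmp; apply: image_subset => s [s0 hs].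
split => //; apply/eqP; rewrite eq_le; apply/andP; split.
  apply: ge_ereal_sup => _ [d /= d0 <-].
  apply: le_trans (hausdorff_delta_image_le d L0 s0 hL hG) _.
  rewrite -(mule0 (powR L s)%:E) lee_wpmul2l ?lee_fin ?powR_ge0 // -hs.
  by apply: ereal_sup_ubound; exists (d / L)%R => //=; rewrite divr_gt0.
apply: (@le_trans _ _ (hausdorff_delta s 1 G)); first exact: hausdorff_delta_ge0.
by apply: ereal_sup_ubound; exists 1%R => //=.
Qed.

(* A [d]-packing of [B] is pulled back to a [d / L]-packing of [A] with the
   same centres' preimages and radii divided by [L]; Lipschitz continuity
   keeps the shrunken balls disjoint. *)
Lemma packing_delta_image_le phi L s d A B : (0 < L)%R -> (0 <= s)%R ->
  edist_lipschitz A L phi -> B `<=` phi @` A ->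
  packing_delta s d B <= (powR L s)%:E * packing_delta s (d / L) A.
Proof.
move=> L0 s0 hL hB; rewrite /packing_delta -ereal_sup_pZl ?powR_gt0 //.
apply: ge_ereal_sup => _ [[J r] [y [/= hy hdisj]] <-].
have /boolp.choice [x hx] : forall i, exists p, J i -> A p /\ phi p = y i.
  move=> i; have [Ji|nJi] := pselect (J i); last by exists (y i).
  by have [p Ap <-] := hB _ (hy i Ji).1; exists p.
apply: ereal_sup_ubound; exists (\sum_(i <oo)
   (if `[< J i >] then (powR (2 * (r i / L)) s)%:E else 0)).
  exists (J, fun i => r i / L)%R => //; exists x; split => /=.
    move=> i Ji; have [[_ /andP[ri0 rid]] [Axi _]] := (hy i Ji, hx i Ji).
    by rewrite divr_gt0 // ler_pM2r ?invr_gt0.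
  move=> i j Ji Jj ij; apply: cball2_disjoint; rewrite ltNge; apply/negP => hle.
  have [/andP[ri0 _] /andP[rj0 _]] := ((hy i Ji).2, (hy j Jj).2).
  have hyy : (edist (y i) (y j) <= r i + r j)%R.
    rewrite -(hx i Ji).2 -(hx j Jj).2.
    apply: le_trans (hL _ _ (hx i Ji).1 (hx j Jj).1) _.
    by rewrite -ler_pdivlMl // mulrC mulrDl.
  have [z zij] := cball2_meet ri0 rj0 hyy.
  by have := hdisj i j Ji Jj ij; rewrite -subset0; apply; exact: zij.
rewrite -nneseriesZl; last first.
  by move=> i _; case: asboolP => _ //; rewrite lee_fin powR_ge0.
congr (limn _); apply/funext => k; apply: eq_bigr => i _.
case: asboolP => Ji; last by rewrite mule0.
have /andP[ri0 _] := (hy i Ji).2.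
rewrite -EFinM -powRM ?mulr_ge0 ?divr_ge0 ?invr_ge0 ?(ltW ri0) ?(ltW L0) //.
by rewrite (mulrCA L 2%R) (mulrC L) divfK ?gt_eqF.
Qed.

Lemma packing_delta_ge0 s d A : 0 <= packing_delta s d A.
Proof.
apply: ereal_sup_ubound; exists (set0, fun _ => 0%R).
  by exists (fun _ => (0, 0)%R); split => // i.
by rewrite eseries0 // => i _ _ /=; case: asboolP.
Qed.

Lemma packing_delta_subset s d A B : A `<=` B ->
  packing_delta s d A <= packing_delta s d B.
Proof.
move=> h; apply: ereal_sup_le; apply: image_subset => P [x [h1 h2]].
by exists x; split => // i Pi; have [Ax ?] := h1 i Pi; split => //; exact: h.
Qed.

Lemma packing_premeasure_ge0 s A : 0 <= packing_premeasure s A.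
Proof. by apply: le_ereal_inf_tmp => _ [d _ <-]; exact: packing_delta_ge0. Qed.

Lemma packing_premeasure_subset s A B : A `<=` B ->
  packing_premeasure s A <= packing_premeasure s B.
Proof.
move=> h; apply: le_ereal_inf_tmp => _ [d d0 <-].
apply: ge_ereal_inf; exists (packing_delta s d A); first by exists d.
exact: packing_delta_subset.
Qed.

Lemma packing_premeasure_image_le phi L s A B : (0 < L)%R -> (0 <= s)%R ->
  edist_lipschitz A L phi -> B `<=` phi @` A ->
  packing_premeasure s B <= (powR L s)%:E * packing_premeasure s A.
Proof.
move=> L0 s0 hL hB; rewrite /packing_premeasure -ereal_inf_pZl ?powR_gt0 //.
apply: le_ereal_inf_tmp => _ [_ [d /= d0 <-] <-].
apply: ge_ereal_inf; exists (packing_delta s (L * d)%R B).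
  by exists (L * d)%R => //=; rewrite mulr_gt0.
have := packing_delta_image_le (L * d)%R L0 s0 hL hB.
by rewrite mulrC mulfK // gt_eqF.
Qed.

Lemma packing_measure_ge0 s A : 0 <= packing_measure s A.
Proof.
apply: le_ereal_inf_tmp => _ [Fi _ <-].
by apply: nneseries_ge0 => i _ _; exact: packing_premeasure_ge0.
Qed.

Lemma packing_measure_image_le phi L s F G : (0 < L)%R -> (0 <= s)%R ->
  edist_lipschitz F L phi -> G `<=` phi @` F ->
  packing_measure s G <= (powR L s)%:E * packing_measure s F.
Proof.
move=> L0 s0 hL hG; rewrite /packing_measure -ereal_inf_pZl ?powR_gt0 //.
apply: le_ereal_inf_tmp => _ [_ [Fi /= hFi <-] <-].
apply: ge_ereal_inf; exists (\sum_(i <oo) packing_premeasure s (phi @` (Fi i `&` F))).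
  by exists (fun i => phi @` (Fi i `&` F)) => //=; exact: image_cover hFi.
rewrite -nneseriesZl; last by move=> i _; exact: packing_premeasure_ge0.
apply: lee_nneseries; first by move=> i _ _; exact: packing_premeasure_ge0.
move=> i _; apply: (@le_trans _ _ ((powR L s)%:E * packing_premeasure s (Fi i `&` F))).
  apply: packing_premeasure_image_le => //; last exact: subset_refl.
  by move=> p q [_ Fp] [_ Fq]; exact: hL.
apply: lee_wpmul2l; first by rewrite lee_fin powR_ge0.
by apply: packing_premeasure_subset => z [].
Qed.

Lemma packing_dim_image_le phi L F G : (0 < L)%R ->
  edist_lipschitz F L phi -> G `<=` phi @` F -> packing_dim G <= packing_dim F.
Proof.
move=> L0 hL hG; apply: ereal_inf_le_tmp; apply: image_subset => s [s0 hs].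
split => //; apply/eqP; rewrite eq_le packing_measure_ge0 andbT.
by have := packing_measure_image_le L0 s0 hL hG; rewrite hs mule0.
Qed.

Lemma assouad_dim_image_le phi L F G : (1 <= L)%R ->
  edist_lipschitz F L phi ->
  (forall p q, F p -> F q -> edist p q <= L * edist (phi p) (phi q))%R ->
  G `<=` phi @` F -> assouad_dim G <= assouad_dim F.
Proof.
move=> L1 hL hL' hG; have L0 : (0 < L)%R by exact: lt_le_trans L1.
apply: ereal_inf_le_tmp; apply: image_subset => a [a0 [C [C0 hC]]].
split => //; exists (C * powR (L * L) a)%R; split.
  by rewrite mulr_gt0 // powR_gt0 // mulr_gt0.
move=> r Rr r0 rR y Gy; have Rr0 : (0 < Rr)%R := lt_trans r0 rR.
have [x Fx yx] := hG y Gy.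
have hsub : cball2 y Rr `&` G `<=` phi @` (cball2 x (L * Rr) `&` F).
  move=> q [/= yq /hG [p Fp pq]]; exists p => //; split => //=.
  by apply: le_trans (hL' _ _ Fx Fp) _; rewrite yx pq ler_pM2l.
apply: le_trans (@covnum_image_le phi L r _ _ L0 _ hsub) _.
  by move=> p q [_ Fp] [_ Fq]; exact: hL.
have rL0 : (0 < r / L)%R by rewrite divr_gt0.
have rLR : (r / L < L * Rr)%R.
  apply: (@le_lt_trans _ _ r); first by rewrite ler_pdivrMr // ler_peMr // ltW.
  by apply: (lt_le_trans rR); rewrite ler_peMl // ltW.
apply: (le_trans (hC _ _ rL0 rLR x Fx)).
have -> : (L * Rr / (r / L) = (L * L) * (Rr / r))%R by field; rewrite !gt_eqF.
rewrite lee_fin powRM ?mulrA //;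
  by rewrite ?mulr_ge0 ?divr_ge0 ?invr_ge0 ?(ltW L0) ?(ltW r0) ?(ltW Rr0).
Qed.

End LipschitzImage.

Section BoxDimension.
Variable R : realType.
Implicit Types (A B F G : set (R * R)) (phi : R * R -> R * R) (L d e : R).
Local Open Scope ereal_scope.

Lemma covnum_natE d A : covnum d A = +oo \/ exists k : nat, covnum d A = (k%:R)%:E.
Proof.
rewrite /covnum; set S := [set k | _].
have [->|/set0P [k0 Sk0]] := eqVneq S set0.
  by left; rewrite image_set0 ereal_inf0.
right; have hex : exists k, `[< S k >] by exists k0; apply/asboolP.
case: (ex_minnP hex) => m /asboolP Sm mmin; exists m.
apply/eqP; rewrite eq_le ereal_inf_lbound //=; last by exists m.
apply: le_ereal_inf_tmp => _ [k Sk <-]; rewrite lee_fin ler_nat.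
by apply: mmin; apply/asboolP.
Qed.

Lemma ler_ln_nat (j k : nat) : (j <= k)%N -> (ln (j%:R : R) <= ln (k%:R : R))%R.
Proof.
case: j => [|j] jk; last by rewrite ler_ln ?posrE ?ltr0n ?ler_nat // (leq_trans _ jk).
rewrite ln0 //; case: k {jk} => [|k]; first by rewrite ln0.
by apply: ln_ge0; rewrite ler1n.
Qed.

Lemma lee_of_mul1D (x y : \bar R) :
  (forall e : R, (0 < e)%R -> x <= (1 + e)%:E * y) -> x <= y.
Proof.
case: y => [u| |] h; last 2 first.
- exact: leey.
- by have := h 1%R ltr01; rewrite gt0_muleNy // lte_fin addr_gt0.
case: x h => [v| |] h; last 2 first.
- by have := h 1%R ltr01.
- exact: leNye.
rewrite lee_fin; have [u0|u0] := lerP u 0.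
  by have := h 1%R ltr01; rewrite -EFinM lee_fin => hv; apply: le_trans hv _; nra.
apply/ler_addgt0Pr => e e0.
have := h (e / u)%R (divr_gt0 e0 u0); rewrite -EFinM lee_fin mulrDl mul1r.
by rewrite divfK // gt_eqF.
Qed.

Lemma oppr_ln_div_le_near0 L e : (1 <= L)%R -> (0 < e)%R ->
  exists2 d0 : R, (0 < d0)%R & forall d, (0 < d < d0)%R ->
    (d < 1)%R /\ (- ln (d / L) <= (1 + e) * (- ln d))%R.
Proof.
move=> L1 e0; have L0 : (0 < L)%R by exact: lt_le_trans L1.
have lL : (0 <= ln L)%R by exact: ln_ge0.
exists (expR (- ln L / e)); first exact: expR_gt0.
move=> d /andP[d0 de].
have hd : (ln d < - ln L / e)%R.
  by rewrite -(expRK (- ln L / e)%R) ltr_ln ?posrE ?expR_gt0.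
split.
  by apply: lt_le_trans de _; rewrite -expR0 ler_expR mulNr oppr_le0 divr_ge0 // ltW.
rewrite lnM ?posrE ?invr_gt0 // lnV ?posrE //.
have : (ln d * e < - ln L)%R by rewrite -ltr_pdivlMr.
nra.
Qed.

Lemma box_ratio_le_covnum L e d A B : (1 <= L)%R -> (0 < d < 1)%R ->
  (- ln (d / L) <= (1 + e) * (- ln d))%R ->
  covnum d B <= covnum (d / L)%R A ->
  box_ratio d B <= (1 + e)%:E * box_ratio (d / L)%R A.
Proof.
move=> L1 /andP[d0 d1] hc hN; have L0 : (0 < L)%R by exact: lt_le_trans L1.
have ld : (0 < - ln d)%R by rewrite oppr_gt0 ln_lt0 // d0.
have ldL : (0 < - ln (d / L))%R.
  rewrite oppr_gt0 ln_lt0 // divr_gt0 //=; apply: (@le_lt_trans _ _ d) => //.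
  by rewrite ler_pdivrMr // ler_peMr // ltW.
have e0 : (0 < 1 + e)%R by rewrite -(pmulr_lgt0 _ ld) (lt_le_trans ldL hc).
rewrite /box_ratio; case: (covnum_natE (d / L)%R A) => [-> | [k Ek]].
  by rewrite gt0_muley ?leey // lte_fin.
rewrite Ek; move: hN; rewrite Ek; case: (covnum_natE d B) => [-> //| [j ->]].
rewrite lee_fin ler_nat -EFinM lee_fin => /ler_ln_nat jk.
have k0 : (0 <= ln (k%:R : R))%R by have := ler_ln_nat (leq0n k); rewrite ln0.
apply: (@le_trans _ _ (ln (k%:R) / - ln d)%R); first by rewrite ler_pM2r ?invr_gt0.
rewrite ler_pdivrMr // (mulrC (1 + e)%R) -mulrA.
apply: le_trans (ler_wpM2l (divr_ge0 k0 (ltW ldL)) hc).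
by rewrite divfK ?gt_eqF.
Qed.

Lemma upper_box_dim_image_le phi L F G : (1 <= L)%R ->
  edist_lipschitz F L phi -> G `<=` phi @` F -> upper_box_dim G <= upper_box_dim F.
Proof.
move=> L1 hL hG; have L0 : (0 < L)%R by exact: lt_le_trans L1.
apply: lee_of_mul1D => eps eps0.
have [d0 d00 hd0] := oppr_ln_div_le_near0 L1 eps0.
rewrite {2}/upper_box_dim -ereal_inf_pZl ?addr_gt0 //.
apply: le_ereal_inf_tmp => _ [_ [e /= e_pos <-] <-].
apply: ge_ereal_inf.
exists (ereal_sup [set box_ratio d G | d in [set d | (0 < d < Order.min e d0)%R]]).
  by exists (Order.min e d0) => //=; rewrite lt_min e_pos d00.
apply: ge_ereal_sup => _ [d /= /andP[d_pos +] <-].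
rewrite lt_min => /andP[de dd0].
have [d1 hc] := hd0 d (introT andP (conj d_pos dd0)).
have d01 : (0 < d < 1)%R by rewrite d_pos d1.
apply: le_trans (box_ratio_le_covnum L1 d01 hc (covnum_image_le d L0 hL hG)) _.
apply: lee_wpmul2l; first by rewrite lee_fin ltW // addr_gt0.
apply: ereal_sup_ubound; exists (d / L)%R => //=.
rewrite divr_gt0 //=; apply: (@le_lt_trans _ _ d) => //.
by rewrite ler_pdivrMr // ler_peMr // ltW.
Qed.

Lemma lower_box_dim_image_le phi L F G : (1 <= L)%R ->
  edist_lipschitz F L phi -> G `<=` phi @` F -> lower_box_dim G <= lower_box_dim F.
Proof.
move=> L1 hL hG; have L0 : (0 < L)%R by exact: lt_le_trans L1.
apply: lee_of_mul1D => eps eps0.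
have [d0 d00 hd0] := oppr_ln_div_le_near0 L1 eps0.
have p0 : (0 < 1 + eps)%R by rewrite addr_gt0.
rewrite /lower_box_dim -ereal_sup_pZl //.
apply: ge_ereal_sup => _ [e /= e_pos <-].
set e2 := Order.min e d0; have e20 : (0 < e2)%R by rewrite lt_min e_pos d00.
set infF := ereal_inf [set box_ratio d F | d in [set d | (0 < d < e2 / L)%R]].
apply: le_ereal_sup_tmp; exists ((1 + eps)%:E * infF).
  by exists infF => //; exists (e2 / L)%R => //=; rewrite divr_gt0.
rewrite /infF -ereal_inf_pZl //.
apply: le_ereal_inf_tmp => _ [_ [d /= /andP[d_pos dL] <-] <-].
have Ld0 : (0 < L * d)%R by rewrite mulr_gt0.
have : (L * d < e2)%R by rewrite mulrC -ltr_pdivlMr.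
rewrite lt_min => /andP[Lde Ldd0].
apply: ge_ereal_inf; exists (box_ratio (L * d)%R G).
  by exists (L * d)%R => //=; rewrite Ld0 Lde.
have [d1 hc] := hd0 (L * d)%R (introT andP (conj Ld0 Ldd0)).
have Ld01 : (0 < L * d < 1)%R by rewrite Ld0 d1.
have := box_ratio_le_covnum L1 Ld01 hc (covnum_image_le (L * d) L0 hL hG).
by rewrite mulrC mulfK ?gt_eqF.
Qed.

End BoxDimension.

Section Graphs.
Variable R : realType.
Implicit Types (f g : R -> R) (K : R).

Lemma graph01_dims_le f g K : 1 <= K ->
  (forall x y, 0 <= x <= 1 -> 0 <= y <= 1 -> `|g x - g y| <= K * `|f x - f y|) ->
  (forall x y, 0 <= x <= 1 -> 0 <= y <= 1 -> `|f x - f y| <= K * `|g x - g y|) ->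
  [/\ (upper_box_dim (graph01 g) <= upper_box_dim (graph01 f))%E,
      (lower_box_dim (graph01 g) <= lower_box_dim (graph01 f))%E,
      (packing_dim (graph01 g) <= packing_dim (graph01 f))%E,
      (hausdorff_dim (graph01 g) <= hausdorff_dim (graph01 f))%E &
      (assouad_dim (graph01 g) <= assouad_dim (graph01 f))%E].
Proof.
move=> K1 hgf hfg; have K0 : 0 < K by exact: lt_le_trans K1.
pose phi := fun p : R * R => (p.1, g p.1).
have hL : edist_lipschitz (graph01 f) K phi.
  move=> [x _] [y _] [/= hx ->] [/= hy ->].
  by apply: (edist_vertical_le K1) => //=; exact: hgf.
have hL' : forall p q, graph01 f p -> graph01 f q ->
    edist p q <= K * edist (phi p) (phi q).
  move=> [x _] [y _] [/= hx ->] [/= hy ->].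
  by apply: (edist_vertical_le K1) => //=; exact: hfg.
have hG : graph01 g `<=` phi @` graph01 f by move=> [x _] [/= hx ->]; exists (x, f x).
split.
- exact: upper_box_dim_image_le K1 hL hG.
- exact: lower_box_dim_image_le K1 hL hG.
- exact: packing_dim_image_le K0 hL hG.
- exact: hausdorff_dim_image_le K0 hL hG.
- exact: assouad_dim_image_le K1 hL hL' hG.
Qed.

End Graphs.

Section Powers.
Variable R : realType.
Implicit Types (a b m M : R) (f : R -> R).

Lemma ler_normBXn a b m M n : (0 < n)%N -> 0 < m ->
  m <= a <= M -> m <= b <= M ->
  n%:R * m ^+ n.-1 * `|a - b| <= `|a ^+ n - b ^+ n| <= n%:R * M ^+ n.-1 * `|a - b|.
Proof.
move=> n0 m0 /andP[ma aM] /andP[mb bM].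
have a0 : 0 <= a by exact: le_trans (ltW m0) ma.
have b0 : 0 <= b by exact: le_trans (ltW m0) mb.
have [m0' M0] : 0 <= m /\ 0 <= M by split; [exact: ltW | exact: le_trans a0 aM].
rewrite subrXX normrM (mulrC `|a - b|).
set S := \sum_(i < n) _.
have split_pow (c : R) (i : 'I_n) : c ^+ n.-1 = c ^+ (n.-1 - i) * c ^+ i.
  by rewrite -exprD subnK // -ltnS prednK.
have lo : n%:R * m ^+ n.-1 <= S.
  rewrite -[n in n%:R]card_ord mulr_natl -sumr_const /S; apply: ler_sum => i _.
  rewrite (split_pow _ i).
  by apply: ler_pM; rewrite ?exprn_ge0 //; apply: lerXn2r; rewrite // nnegrE.
have hi : S <= n%:R * M ^+ n.-1.
  rewrite -[n in n%:R]card_ord mulr_natl -sumr_const /S; apply: ler_sum => i _.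
  rewrite (split_pow _ i).
  by apply: ler_pM; rewrite ?exprn_ge0 //; apply: lerXn2r; rewrite // nnegrE.
have S0 : 0 <= S by apply: le_trans lo; rewrite mulr_ge0 // exprn_ge0 // ltW.
by rewrite ger0_norm // !ler_wpM2r.
Qed.

Lemma ler_normBXn_sgn a b m M n : (0 < n)%N -> 0 < m -> 0 < a * b ->
  m <= `|a| <= M -> m <= `|b| <= M ->
  n%:R * m ^+ n.-1 * `|a - b| <= `|a ^+ n - b ^+ n| <= n%:R * M ^+ n.-1 * `|a - b|.
Proof.
move=> n0 m0 ab; have [a0|a0] := ltrP 0 a.
  have b0 : 0 < b by rewrite -(pmulr_rgt0 _ a0).
  by rewrite (gtr0_norm a0) (gtr0_norm b0); exact: ler_normBXn.
have a0' : a < 0.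
  by rewrite lt_neqAle a0 andbT; apply: contraTneq ab => ->; rewrite mul0r ltxx.
have b0 : b < 0 by rewrite -(nmulr_rgt0 _ a0').
rewrite (ltr0_norm a0') (ltr0_norm b0) => ha hb; have := ler_normBXn n0 m0 ha hb.
by rewrite exprNn [(- b) ^+ n]exprNn -mulrBr normrM normrX normrN1 expr1n mul1r
  -opprD normrN.
Qed.

Lemma nonvanishing_mul_gt0 f : {within `[0, 1], continuous f} ->
  (forall x, 0 <= x <= 1 -> f x != 0) ->
  forall x y, 0 <= x <= 1 -> 0 <= y <= 1 -> 0 < f x * f y.
Proof.
move=> hf hnz.
have no_sign_change x y : 0 <= x -> x <= y -> y <= 1 -> ~ f x * f y < 0.
  move=> x0 xy y1 hneg.
  have sub : `[x, y] `<=` `[0, 1].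
    move=> z; rewrite /= !in_itv /= => /andP[xz zy].
    by rewrite (le_trans x0 xz) (le_trans zy y1).
  have hm : Order.min (f x) (f y) <= 0 <= Order.max (f x) (f y).
    by rewrite ge_min le_max; case: (lerP (f x) 0) => fx0; apply/andP; split; nra.
  have [c cxy fc] := @IVT _ f x y 0 xy (continuous_subspaceW sub hf) hm.
  by move: (sub c cxy); rewrite /= in_itv => /hnz; rewrite fc eqxx.
move=> x y hx hy; rewrite lt_neqAle eq_sym mulf_neq0 ?hnz //= leNgt.
apply/negP; have /andP[x0 x1] := hx; have /andP[y0 y1] := hy.
have [xy|yx] := lerP x y; first exact: no_sign_change.
by rewrite mulrC; apply: no_sign_change => //; exact: ltW.
Qed.

Lemma nonvanishing_norm_bounds f : {within `[0, 1], continuous f} ->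
  (forall x, 0 <= x <= 1 -> f x != 0) ->
  exists m M, 0 < m /\ forall x, 0 <= x <= 1 -> m <= `|f x| <= M.
Proof.
move=> hf hnz.
have hnf : {within `[0, 1], continuous (fun x => `|f x|)}.
  by move=> x; exact: continuous_comp (hf x) (@norm_continuous _ R^o _).
have [c1 c1i hc1] := EVT_min ler01 hnf; have [c2 _ hc2] := EVT_max ler01 hnf.
exists `|f c1|, `|f c2|; split.
  by rewrite normr_gt0 hnz //; rewrite in_itv in c1i.
by move=> x hx; rewrite hc1 ?hc2 // in_itv.
Qed.

Lemma nonvanishing_exprn_bilipschitz f n : {within `[0, 1], continuous f} ->
  (forall x, 0 <= x <= 1 -> f x != 0) -> (0 < n)%N ->
  exists K, [/\ 1 <= K,
    forall x y, 0 <= x <= 1 -> 0 <= y <= 1 ->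
      `|f x ^+ n - f y ^+ n| <= K * `|f x - f y| &
    forall x y, 0 <= x <= 1 -> 0 <= y <= 1 ->
      `|f x - f y| <= K * `|f x ^+ n - f y ^+ n|].
Proof.
move=> hf hnz n0; have [m [M [m0 hb]]] := nonvanishing_norm_bounds hf hnz.
set c1 := n%:R * m ^+ n.-1; set c2 := n%:R * M ^+ n.-1.
have c10 : 0 < c1 by rewrite mulr_gt0 ?ltr0n // exprn_gt0.
have c20 : 0 <= c2.
  have /andP[m1 M1] : m <= `|f 0| <= M by apply: hb; rewrite lexx ler01.
  by rewrite mulr_ge0 // exprn_ge0 // (le_trans (ltW m0) (le_trans m1 M1)).
have ic10 : 0 <= c1^-1 by rewrite invr_ge0 ltW.
have key x y : 0 <= x <= 1 -> 0 <= y <= 1 ->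
    c1 * `|f x - f y| <= `|f x ^+ n - f y ^+ n| <= c2 * `|f x - f y|.
  move=> hx hy; exact: ler_normBXn_sgn n0 m0 (nonvanishing_mul_gt0 hf hnz hx hy)
    (hb x hx) (hb y hy).
exists (1 + c2 + c1^-1); split => [|x y hx hy|x y hx hy]; first lra.
  have /andP[_ up] := key x y hx hy.
  by apply: le_trans up _; rewrite ler_wpM2r //; lra.
have /andP[low _] := key x y hx hy.
have : `|f x - f y| <= c1^-1 * `|f x ^+ n - f y ^+ n| by rewrite ler_pdivlMl.
by move/le_trans; apply; rewrite ler_wpM2r //; lra.
Qed.

End Powers.

Theorem mainTheorem4 (R : realType) (f : R -> R)
  (hf : {within `[0, 1], continuous f})
  (hnz : forall x : R, 0 <= x <= 1 -> f x != 0)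
  (n : nat) (hn : (0 < n)%N) :
  let g := fun x => f x ^+ n in
  [/\ upper_box_dim (graph01 g) = upper_box_dim (graph01 f),
      lower_box_dim (graph01 g) = lower_box_dim (graph01 f),
      packing_dim (graph01 g) = packing_dim (graph01 f),
      hausdorff_dim (graph01 g) = hausdorff_dim (graph01 f) &
      assouad_dim (graph01 g) = assouad_dim (graph01 f)].
Proof.
move=> g; have [K [K1 hgf hfg]] := nonvanishing_exprn_bilipschitz hf hnz hn.
have [u1 l1 p1 h1 a1] := graph01_dims_le K1 hgf hfg.
have [u2 l2 p2 h2 a2] := graph01_dims_le K1 hfg hgf.
by split; apply/eqP; rewrite eq_le; apply/andP; split.
Qed.
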